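(* Let $\phi$ be a cocycle with respect to $\theta$ on $\mathbb{R}^+\times\Sigma\times X$ having a nested bounded pullback absorbing set $\{B_\sigma\}_{\sigma\in\Sigma}$. Assume that for every $\varepsilon>0$ and every $\sigma\in\Sigma$ there exist $T=T(B_\sigma,\varepsilon)\ge0$ and a function $\psi_{T,\sigma}\in\mathrm{Contr}(B_\sigma)$ such that $$\|\phi(T,\theta_{-T}(\sigma);x)-\phi(T,\theta_{-T}(\sigma);y)\|\le\varepsilon+\psi_{T,\sigma}(x,y)\quad\text{for all }x,y\in B_\sigma.$$ Then $\phi$ is pullback asymptotically compact.
   Context: Let $X$ be a Banach space with norm $\|\cdot\|$. Let $\Sigma$ be a set and $\theta=\{\theta_t\}_{t\in\mathbb{R}}$ a group of bijections $\theta_t:\Sigma\to\Sigma$ with $\theta_0=\mathrm{id}$ and $\theta_{t+\tau}=\theta_t\circ\theta_\tau$. A cocycle with respect to $\theta$ is a map $\phi:\mathbb{R}^+\times\Sigma\times X\to X$ with $\phi(0,\sigma;x)=x$ and $\phi(s+t,\sigma;x)=\phi(s,\theta_t(\sigma);\phi(t,\sigma;x))$ for all $s,t\ge 0$. For $B\subset X$, $\phi(t,\sigma;B)=\{\phi(t,\sigma;x):x\in B\}$. A bounded pullback absorbing set is a family $\{B_\sigma\}_{\sigma\in\Sigma}$ of bounded subsets of $X$ such that for every $\sigma$ and bounded $B\subset X$ there is $T\ge0$ with $\phi(t,\theta_{-t}(\sigma);B)\subset B_\sigma$ for all $t\ge T$; it is nested if moreover $B_{\theta_{-t}(\sigma)}\subset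 B_\sigma$ for all $t\ge0$, $\sigma\in\Sigma$. For a bounded set $B\subset X$, $\mathrm{Contr}(B)$ denotes the set of functions $\psi:X\times X\to\mathbb{R}$ such that every sequence $\{x_n\}\subset B$ has a subsequence $\{x_{n_k}\}$ with $\lim_{k\to\infty}\lim_{l\to\infty}\psi(x_{n_k},x_{n_l})=0$. $\phi$ is pullback asymptotically compact if for each $\sigma\in\Sigma$, every bounded sequence $\{x_n\}\subset X$ and every $\{t_n\}\subset\mathbb{R}^+$ with $t_n\to+\infty$, the sequence $\{\phi(t_n,\theta_{-t_n}(\sigma);x_n)\}$ is precompact in $X$. *)

From HB Require Import structures.
From mathcomp Require Import all_boot all_order all_algebra.
From mathcomp Require Import all_classical all_reals all_analysis.
Set Implicit Arguments. Unset Strict Implicit. Unset Printing Implicit Defensive.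
Import Order.TTheory GRing.Theory Num.Theory.
Import numFieldNormedType.Exports.
Local Open Scope classical_set_scope.
Local Open Scope ring_scope.

Section Defs.
Variables (R : realType) (X : completeNormedModType R) (Sigma : Type).

Definition is_group_flow (theta : R -> Sigma -> Sigma) : Prop :=
  (forall t, bijective (theta t)) /\
  theta 0 = id /\
  (forall t tau, theta (t + tau) = theta t \o theta tau).

(* cocycle phi : R^+ x Sigma x X -> X (only values at t >= 0 matter) *)
Definition is_cocycle (theta : R -> Sigma -> Sigma) (phi : R -> Sigma -> X -> X)
  : Prop :=
  (forall sigma x, phi 0 sigma x = x) /\
  (forall s t sigma x, 0 <= s -> 0 <= t ->
     phi (s + t) sigma x = phi s (theta t sigma) (phi t sigma x)).

Definition pullback_absorbing (theta : R -> Sigma -> Sigma)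
  (phi : R -> Sigma -> X -> X) (B : Sigma -> set X) : Prop :=
  (forall sigma, bounded_set (B sigma)) /\
  (forall sigma (D : set X), bounded_set D ->
     exists T, 0 <= T /\ forall t, T <= t ->
       phi t (theta (- t) sigma) @` D `<=` B sigma).

Definition nested (theta : R -> Sigma -> Sigma) (B : Sigma -> set X) : Prop :=
  forall sigma t, 0 <= t -> B (theta (- t) sigma) `<=` B sigma.

Definition Contr (B : set X) (psi : X -> X -> R) : Prop :=
  forall x : nat -> X, (forall n, B (x n)) ->
    exists (s : nat -> nat) (L : nat -> R),
      {homo s : m n / (m < n)%N >-> (m < n)%N} /\
      (forall k, (fun l => psi (x (s k)) (x (s l))) @ \oo --> L k) /\
      L @ \oo --> (0 : R).

(* precompact sequence: its set of values has compact closure *)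
Definition pullback_asymptotically_compact (theta : R -> Sigma -> Sigma)
  (phi : R -> Sigma -> X -> X) : Prop :=
  forall sigma (x : nat -> X) (t : nat -> R),
    bounded_set (range x) -> (forall n, 0 <= t n) -> t @ \oo --> +oo ->
    compact (closure (range (fun n => phi (t n) (theta (- t n) sigma) (x n)))).

End Defs.

(* Cover the pullback images by finitely many balls of radius e.  If this
   failed, one could extract an e-separated subsequence of them.  For large
   times these images are of the form phi(T, theta_{-T} sigma; z_k) with z_k in
   B_sigma, by the cocycle property and the nested absorbing sets.  The
   contractive function psi, taken for eps = e/2, yields indices m < n with
   psi(z_m, z_n) < e/2, hence two of the separated points at distance < e.
   Total boundedness then gives precompactness, since X is complete. *)

From HB Require Import structures.
From mathcomp Require Import all_boot all_order all_algebra.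
From mathcomp Require Import all_classical all_reals all_analysis.
From mathcomp Require Import lra.
Import Order.TTheory GRing.Theory Num.Theory.
Import numFieldNormedType.Exports.
Local Open Scope classical_set_scope.
Local Open Scope ring_scope.

Lemma ultra_exists_in_seq {T : Type} {I : eqType} {F : set_system T}
    {s : seq I} {P : I -> set T} :
  UltraFilter F -> F [set x | exists2 i, i \in s & P i x] ->
  exists2 i, i \in s & F (P i).
Proof.
move=> FU; have PF : ProperFilter F := @ultra_proper _ F FU.
elim: s => [|i s IH] Fs.
  have F0 : F set0 by apply: filterS Fs => x [].
  by have := @filter_not_empty _ F PF F0.
have [FPi|FnPi] := in_ultra_setVsetC (P i) FU; first by exists i; rewrite ?mem_head.
have [|j js FPj] := IH; last by exists j; rewrite // in_cons js orbT.
apply: filterS (filterI Fs FnPi) => x [[j]].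
by rewrite in_cons => /orP[/eqP-> //|js Pjx] _; exists j.
Qed.

Section TotallyBounded.
Variables (R : numFieldType) (X : pseudoMetricType R).

Definition totally_bounded (A : set X) :=
  forall e : R, 0 < e ->
    exists s : seq X, A `<=` [set x | exists2 c, c \in s & ball c e x].

Lemma not_totally_bounded_separated (y : nat -> X) :
  ~ totally_bounded (range y) -> exists2 e, 0 < e &
    forall N, exists idx : nat -> nat, (forall k, (N <= idx k)%N) /\
      forall m n, (m < n)%N -> ~ ball (y (idx m)) e (y (idx n)).
Proof.
move=> /existsNP[e /not_implyP[e0 ncov]]; exists e => // N.
have tail_escapes (s : seq X) :
    exists j, (N <= j)%N /\ ~ exists2 c, c \in s & ball c e (y j).
  apply: contrapT => Hs; apply: ncov; exists (s ++ map y (iota 0 N)).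
  move=> _ [j _ <-]; have [Nj|jN] := leqP N j.
    apply: contrapT => nb; apply: Hs; exists j; split => // -[c cs bc].
    by apply: nb; exists c; rewrite ?mem_cat ?cs.
  by exists (y j); rewrite ?mem_cat ?map_f ?orbT ?mem_iota //; exact: ballxx.
have [g Hg] := choice tail_escapes.
pose fix chosen n := if n is n'.+1 then y (g (chosen n')) :: chosen n' else [::].
exists (fun n => g (chosen n)); split=> [k|m n mn bmn]; first exact: (Hg _).1.
apply: (Hg (chosen n)).2; exists (y (g (chosen m))) => //.
elim: n mn {bmn} => // n IH; rewrite ltnS leq_eqVlt => /orP[/eqP->|mn].
  exact: mem_head.
by rewrite in_cons IH ?orbT.
Qed.

End TotallyBounded.
Arguments totally_bounded {R X}.

Lemma totally_bounded_precompact (R : numFieldType)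
    (X : completePseudoMetricType R) (A : set X) :
  totally_bounded A -> compact (closure A).
Proof.
move=> tbA; rewrite compact_ultra => F FU FA.
have PF : ProperFilter F := @ultra_proper _ F FU.
have cauchyF : cauchy F.
  apply: cauchy_exP => e e0.
  have e20 : 0 < e / 2 by rewrite divr_gt0.
  have [s covA] := tbA _ e20.
  suff /(ultra_exists_in_seq FU)[c _ Fc] :
      F [set x | exists2 c, c \in s & ball c e x] by exists c.
  apply: filterS FA => p clp.
  have [a [Aa pa]] := clp (ball p (e / 2)) (nbhsx_ballx p _ e20).
  have [c cs ca] := covA a Aa; exists c => //.
  by rewrite (splitr e); exact: ball_triangle ca (ball_sym pa).
have cvgF : cvg F by exact: cauchy_cvg.
exists (lim F); split => //.
exact: (@closed_cvg _ _ F PF id _ (@closed_closure _ A) FA).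
Qed.

Lemma Contr_small_pair {R : realType} {X : completeNormedModType R}
    {A : set X} {psi : X -> X -> R} {w : nat -> X} {eps : R} :
  Contr A psi -> (forall n, A (w n)) -> 0 < eps ->
  exists m n, (m < n)%N /\ psi (w m) (w n) < eps.
Proof.
move=> cA Aw eps0; have eps20 : 0 < eps / 2 by rewrite divr_gt0.
have [s [L [s_incr [cvgL L0]]]] := cA w Aw.
have [k0 _ Lk0] := cvgr_dist_lt _ _ L0 _ eps20.
have [l0 _ Ll0] := cvgr_dist_lt _ _ (cvgL k0) _ eps20.
pose l := maxn l0 k0.+1.
exists (s k0), (s l); split; first by apply: s_incr; exact: leq_maxr.
have := Lk0 k0 (leqnn k0); have := Ll0 l (leq_maxl _ _).
rewrite sub0r normrN; set p := psi _ _; set a := L k0 => pa a0.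
have := ler_norm a; have : p - a <= `|a - p| by rewrite distrC ler_norm.
lra.
Qed.

Section Cocycle.
Context {R : realType} {X : completeNormedModType R} {Sigma : Type}.
Context {theta : R -> Sigma -> Sigma} {phi : R -> Sigma -> X -> X}.
Hypotheses (flow : is_group_flow theta) (cocycle : is_cocycle theta phi).

Lemma group_flow_shift (t T : R) (sigma : Sigma) :
  theta (- t) sigma = theta (- (t - T)) (theta (- T) sigma).
Proof.
have [_ [_ theta_add]] := flow.
rewrite -[RHS]/((theta (- (t - T)) \o theta (- T)) sigma) -theta_add.
by congr theta; rewrite opprB addrC addKr.
Qed.

Lemma cocycle_pullback_split (T t : R) (sigma : Sigma) (x : X) :
  0 <= T -> T <= t ->
  phi t (theta (- t) sigma) x =
  phi T (theta (- T) sigma) (phi (t - T) (theta (- (t - T)) (theta (- T) sigma)) x).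
Proof.
have [_ phi_add] := cocycle; move=> T0 Tt.
rewrite -group_flow_shift (group_flow_shift T t) opprB -phi_add ?subr_ge0 //.
by rewrite [T + _]addrC subrK.
Qed.

Lemma pullback_image_absorbed {B : Sigma -> set X} (D : set X) (sigma : Sigma)
    (T : R) :
  pullback_absorbing theta phi B -> nested theta B -> bounded_set D -> 0 <= T ->
  exists T1, forall t x, T1 <= t -> D x ->
    exists2 z, B sigma z & phi t (theta (- t) sigma) x = phi T (theta (- T) sigma) z.
Proof.
move=> [_ absorb] B_nested Dbd T0.
have [T1 [T10 absT1]] := absorb (theta (- T) sigma) D Dbd.
exists (T1 + T) => t x tT1 Dx.
have tT : T1 <= t - T by rewrite lerBrDr.
exists (phi (t - T) (theta (- (t - T)) (theta (- T) sigma)) x).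
  by apply: (B_nested sigma T T0); apply: (absT1 _ tT); exists x.
by apply: cocycle_pullback_split; rewrite // -subr_ge0 (le_trans T10).
Qed.

End Cocycle.

Theorem theorem4p2 (R : realType) (X : completeNormedModType R) (Sigma : Type)
  (theta : R -> Sigma -> Sigma) (phi : R -> Sigma -> X -> X)
  (B : Sigma -> set X) :
  is_group_flow theta ->
  is_cocycle theta phi ->
  pullback_absorbing theta phi B ->
  nested theta B ->
  (forall eps : R, 0 < eps -> forall sigma : Sigma,
     exists T : R, 0 <= T /\ exists psi : X -> X -> R,
       Contr (B sigma) psi /\
       forall x y, B sigma x -> B sigma y ->
         `|phi T (theta (- T) sigma) x - phi T (theta (- T) sigma) y|
           <= eps + psi x y) ->
  pullback_asymptotically_compact theta phi.
Proof.
move=> flow cocycle absorbing B_nested contractive sigma x t xbd _ t_oo.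
apply: totally_bounded_precompact.
apply: contrapT => /not_totally_bounded_separated[e e0 separated].
have e20 : 0 < e / 2 by rewrite divr_gt0.
have [T [T0 [psi [Cpsi psi_bound]]]] := contractive _ e20 sigma.
have [T1 absorbed] :=
  pullback_image_absorbed flow cocycle _ sigma T absorbing B_nested xbd T0.
have [N _ tN] := cvgry_ge t_oo T1.
have [idx [idxN idx_sep]] := separated N.
have /choice[z zP] :
    forall k, exists z, B sigma z /\
      phi (t (idx k)) (theta (- t (idx k)) sigma) (x (idx k)) =
      phi T (theta (- T) sigma) z.
  move=> k; have [z Bz yz] := absorbed _ _ (tN _ (idxN k)) (imageT x (idx k)).
  by exists z.
have [m [n [mn psi_small]]] := Contr_small_pair Cpsi (fun k => (zP k).1) e20.
apply: (idx_sep m n mn); rewrite -ball_normE /= (zP m).2 (zP n).2.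
apply: le_lt_trans (psi_bound _ _ (zP m).1 (zP n).1) _.
by rewrite [ltRHS]splitr ltrD2l.
Qed.
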